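(* Let $N, N_y, M, p \in \mathbb{N}$ with $p\le N$, $X \in \mathbb{R}^{N \times M}$, $Y \in \mathbb{R}^{N_y \times M}$, $\lambda \ge 0$, $\Omega=\{1,\dots,N\}$, let $\bar S_0\subset\cdots\subset\bar S_p$ with feasible sets $\mathcal{I}_1,\dots,\mathcal{I}_p$ be a greedy sequence, and let $\xi^{(k)},\theta^{(k)},\Xi^{(k)},\Theta^{(k)}$ be defined as in the context. Let $f_i^{(k)} := \|(Q^{xy}_i(\bar S_k))^\top\|^2$ and $g_i^{(k)} := Q^{xx}_{i,i}(\bar S_k)$. Then for any $k\in\{1,\dots,p\}$ and $i \in \mathcal{I}_k$, \begin{align*} f_i^{(k)} &= f_i^{(k-1)} - \xi^{(k)}_i\Bigl(2X_iY^\top\theta^{(k)} - 2\,\Xi^{(k-1)}_i \Theta^{(k-1)\top}\theta^{(k)} - \|\theta^{(k)}\|^2 \xi^{(k)}_i\Bigr),\\ g_i^{(k)} &= g_i^{(k-1)} - \xi^{(k)}_i\xi^{(k)}_i. \end{align*}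
   Context: Notation: for a matrix $A$ and an ordered index set $S$, $A_S$ is the submatrix of rows indexed by $S$, $A_{S,S}$ the principal submatrix; $A_i$ is row $i$ of $A$, $A_{i,i}$ its $(i,i)$ entry; $v_i$ is the $i$th component of vector $v$; $\|\cdot\|$ is the Euclidean norm; $(I_N)_s^\top$ is the $s$th canonical unit vector. $P^{xx} = XX^\top + \lambda I_N$, $P^{xy} = XY^\top$. $Q^{xx}(\emptyset)=P^{xx}$, $Q^{xy}(\emptyset)=P^{xy}$, and for $|S|\ge1$ with $P^{xx}_{S,S}\succ0$: $Q^{xx}(S) = P^{xx} - (P^{xx}_S)^\top (P^{xx}_{S,S})^{-1} P^{xx}_S$, $Q^{xy}(S) = P^{xy} - (P^{xx}_S)^\top (P^{xx}_{S,S})^{-1} P^{xy}_S$. $J(S) = \operatorname{tr}\{ Y X_S^\top (X_S X_S^\top + \lambda I_{|S|})^{-1} X_S Y^\top \}$ for feasible $S$, $J(\emptyset)=0$. Greedy sequence: $\bar S_0=\emptyset$; for $k=1,\dots,p$, $\mathcal{I}_k = \{ i\in\Omega\setminus\bar S_{k-1} : P^{xx}_{S',S'}\succ0,\ S'=\bar S_{k-1}\cup\{i\}\}$ (assumed nonempty), $\bar s_k \in \arg\max_{i\in\mathcal{I}_k}\{J(\bar S_{k-1}\cup\{i\}) - J(\bar S_{k-1})\}$, $\bar S_k = \bar S_{k-1}\cup\{\bar s_k\}$. Recursion, starting from empty $\Xi^{(0)}\in\mathbb{R}^{N\times0}$, $\Theta^{(0)}\in\mathbb{R}^{N_y\times0}$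 (products with them equal to zero): $\delta^{(k)} = X X_{\bar s_k}^\top + \lambda (I_N)_{\bar s_k}^\top - \Xi^{(k-1)}(\Xi^{(k-1)}_{\bar s_k})^\top$, $\xi^{(k)} = \delta^{(k)}/\sqrt{\delta^{(k)}_{\bar s_k}}$, $\theta^{(k)} = (Y X_{\bar s_k}^\top - \Theta^{(k-1)}(\Xi^{(k-1)}_{\bar s_k})^\top)/\sqrt{\delta^{(k)}_{\bar s_k}}$, $\Xi^{(k)}=[\Xi^{(k-1)},\xi^{(k)}]$, $\Theta^{(k)}=[\Theta^{(k-1)},\theta^{(k)}]$. *)

From mathcomp Require Import all_boot all_order all_algebra.
Set Implicit Arguments. Unset Strict Implicit. Unset Printing Implicit Defensive.
Import Order.TTheory GRing.Theory Num.Theory.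
Local Open Scope ring_scope.

Section Greedy.
Variables (R : rcfType) (N Ny M : nat).
Variables (X : 'M[R]_(N, M)) (Y : 'M[R]_(Ny, M)) (lam : R).

Definition posdef n (A : 'M[R]_n) : Prop :=
  A^T = A /\ forall v : 'cV[R]_n, v != 0 -> 0 < (v^T *m A *m v) 0 0.

Definition Pxx : 'M[R]_N := X *m X^T + lam%:M.
Definition Pxy : 'M[R]_(N, Ny) := X *m Y^T.

(* Ordered index sets S are sequences of indices; A_S = rows of A indexed by S,
   A_{S,S} = principal submatrix. *)
Definition subrows m (S : seq 'I_N) (A : 'M[R]_(N, m)) : 'M[R]_(size S, m) :=
  rowsub (tnth (in_tuple S)) A.
Definition subprinc (S : seq 'I_N) (A : 'M[R]_N) : 'M[R]_(size S) :=
  mxsub (tnth (in_tuple S)) (tnth (in_tuple S)) A.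

(* For S = [::] the formula reduces to Q(emptyset) = P (empty products are 0). *)
Definition Qxx (S : seq 'I_N) : 'M[R]_N :=
  Pxx - (subrows S Pxx)^T *m invmx (subprinc S Pxx) *m subrows S Pxx.
Definition Qxy (S : seq 'I_N) : 'M[R]_(N, Ny) :=
  Pxy - (subrows S Pxx)^T *m invmx (subprinc S Pxx) *m subrows S Pxy.

Definition J (S : seq 'I_N) : R :=
  \tr (Y *m (subrows S X)^T
         *m invmx (subrows S X *m (subrows S X)^T + lam%:M)
         *m subrows S X *m Y^T).

(* i is in the feasible set I_k when S = \bar S_{k-1}. *)
Definition feasible (S : seq 'I_N) (i : 'I_N) : Prop :=
  i \notin S /\ posdef (subprinc (rcons S i) Pxx).

(* Greedy sequence: s = (\bar s_1, ..., \bar s_p); \bar S_k = take k s. *)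
Definition greedy p (s : p.-tuple 'I_N) : Prop :=
  forall k : 'I_p,
    feasible (take k s) (tnth s k) /\
    forall i, feasible (take k s) i ->
      J (rcons (take k s) i) - J (take k s)
        <= J (rcons (take k s) (tnth s k)) - J (take k s).

(* One step of the recursion: from Xi^(k-1), Theta^(k-1) and \bar s_k,
   compute (xi^(k), theta^(k)). *)
Definition xi_theta n (Xi : 'M[R]_(N, n)) (Th : 'M[R]_(Ny, n)) (a : 'I_N)
  : 'cV[R]_N * 'cV[R]_Ny :=
  let delta := X *m (row a X)^T + lam *: col a (1%:M : 'M[R]_N)
               - Xi *m (row a Xi)^T in
  let c := Num.sqrt (delta a 0) in
  (c^-1 *: delta, c^-1 *: (Y *m (row a X)^T - Th *m (row a Xi)^T)).

(* Build (Xi, Theta) from the reversed sequence of selected indices;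
   Xi^(k) = [Xi^(k-1), xi^(k)]. *)
Fixpoint XTrev (r : seq 'I_N) : 'M[R]_(N, size r) * 'M[R]_(Ny, size r) :=
  match r return 'M[R]_(N, size r) * 'M[R]_(Ny, size r) with
  | [::] => (0, 0)
  | a :: r' =>
      let XT := XTrev r' in
      let xt := xi_theta XT.1 XT.2 a in
      (castmx (erefl N, addn1 (size r')) (row_mx XT.1 xt.1),
       castmx (erefl Ny, addn1 (size r')) (row_mx XT.2 xt.2))
  end.

Definition XiTh (S : seq 'I_N) : 'M[R]_(N, size S) * 'M[R]_(Ny, size S) :=
  ((castmx (erefl N, size_rev S) (XTrev (rev S)).1),
   (castmx (erefl Ny, size_rev S) (XTrev (rev S)).2)).

Definition sqnorm m (v : 'cV[R]_m) : R := \sum_(j < m) v j 0 ^+ 2.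

Definition fval (S : seq 'I_N) (i : 'I_N) : R := sqnorm (row i (Qxy S))^T.
Definition gval (S : seq 'I_N) (i : 'I_N) : R := Qxx S i i.

End Greedy.

(* Write E_S for the N x |S| matrix whose columns are the unit vectors e_s,
   s in S, and Z_S := E_S (E_S^T P E_S)^-1 E_S^T with P := P^xx.  Then
   Q^xx(S) = P - P Z_S P and Q^xy(S) = P^xy - P Z_S P^xy are generalised
   Schur complements.  Appending an index a to S changes Z_S by a rank-one
   term, because Z_S is the only matrix of the form E_S W E_S^T with
   P Z_S P E_S = P E_S; hence every Q(S + a) is Q(S) minus the rank-one matrix
   q (Q_a(S)) / q_a, where q := Q^xx(S) e_a and the pivot q_a is positive by
   positive definiteness of P^xx on S + a.  By induction along the greedy
   sequence, Xi Xi^T = P - Q^xx(S) and Xi Theta^T = P^xy - Q^xy(S), so that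
   xi = q / sqrt q_a and theta = Q^xy_a(S)^T / sqrt q_a; expanding row i of
   the rank-one update gives the two recursions. *)

From mathcomp Require Import all_boot all_order all_algebra.
From mathcomp Require Import ring.
Set Implicit Arguments. Unset Strict Implicit. Unset Printing Implicit Defensive.
Import Order.TTheory GRing.Theory Num.Theory.
Local Open Scope ring_scope.

Section Posdef.
Variable R : rcfType.

Lemma posdef_unitmx n (A : 'M[R]_n) : posdef A -> A \in unitmx.
Proof.
case=> _ Apos; rewrite unitmxE unitfE; apply/negP => /det0P [v v_neq0 vA0].
have /Apos : v^T != 0 by rewrite trmx_eq0.
by rewrite trmxK vA0 mul0mx mxE ltxx.
Qed.

Lemma posdef_congruence n m (A : 'M[R]_n) (K : 'M[R]_(n, m)) :
  posdef A -> (forall v : 'cV_m, v != 0 -> K *m v != 0) -> posdef (K^T *m A *m K).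
Proof.
case=> AT Apos K_inj; split; first by rewrite !trmx_mul trmxK AT mulmxA.
by move=> v /K_inj /Apos; rewrite trmx_mul !mulmxA.
Qed.

End Posdef.

Lemma mulmx_castmx_tr (R : pzSemiRingType) n1 n2 (eq_n : n1 = n2) p r
    (A : 'M[R]_(p, n1)) (B : 'M[R]_(r, n1)) :
  castmx (erefl p, eq_n) A *m (castmx (erefl r, eq_n) B)^T = A *m B^T.
Proof. by case: n2 / eq_n; rewrite !castmx_id. Qed.

Lemma sqnormBZ (R : rcfType) n (u v : 'cV[R]_n) (t : R) :
  sqnorm (u - t *: v) = sqnorm u - t * (2 * (u^T *m v) 0 0 - t * sqnorm v).
Proof.
have -> : (u^T *m v) 0 0 = \sum_j u j 0 * v j 0.
  by rewrite mxE; apply: eq_bigr => j _; rewrite mxE.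
rewrite /sqnorm.
transitivity (\sum_j (u j 0 ^+ 2 - t * (2 * (u j 0 * v j 0) - t * v j 0 ^+ 2))).
  by apply: eq_bigr => j _; rewrite !mxE; ring.
by rewrite sumrB -mulr_sumr sumrB -!mulr_sumr.
Qed.

Lemma sqrtrVM (R : rcfType) (x : R) : 0 <= x -> (Num.sqrt x)^-1 * (Num.sqrt x)^-1 = x^-1.
Proof. by move=> x_ge0; rewrite -invfM -expr2 sqr_sqrtr. Qed.

Lemma row_mul_cV (R : pzSemiRingType) m n (u : 'cV[R]_m) (r : 'rV[R]_n) i :
  row i (u *m r) = u i 0 *: r.
Proof. by rewrite row_mul [row i u]mx11_scalar mul_scalar_mx mxE. Qed.

Section OrthoProjection.
Variables (R : rcfType) (N : nat) (P : 'M[R]_N).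
Hypothesis PT : P^T = P.

(* [oproj E *m P] is the P-orthogonal projector onto the column space of E. *)
Definition oproj n (E : 'M[R]_(N, n)) : 'M[R]_N :=
  E *m invmx (E^T *m P *m E) *m E^T.

Definition schur n (E : 'M[R]_(N, n)) m (B : 'M[R]_(N, m)) : 'M[R]_(N, m) :=
  B - P *m oproj E *m B.

Lemma oprojT n (E : 'M[R]_(N, n)) : (oproj E)^T = oproj E.
Proof. by rewrite !trmx_mul trmxK trmx_inv !trmx_mul trmxK PT !mulmxA. Qed.

Lemma schurT n (E : 'M[R]_(N, n)) : (schur E P)^T = schur E P.
Proof. by rewrite /schur linearB /= trmx_mul trmx_mul oprojT PT mulmxA. Qed.

Lemma schur_castmx n1 n2 (eq_n : n1 = n2) (E : 'M[R]_(N, n1)) m (B : 'M[R]_(N, m)) :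
  schur (castmx (erefl N, eq_n) E) B = schur E B.
Proof. by case: n2 / eq_n; rewrite castmx_id. Qed.

Lemma posdef_gram_castmx n1 n2 (eq_n : n1 = n2) (E : 'M[R]_(N, n1)) :
  posdef ((castmx (erefl N, eq_n) E)^T *m P *m castmx (erefl N, eq_n) E) ->
  posdef (E^T *m P *m E).
Proof. by case: n2 / eq_n; rewrite castmx_id. Qed.

Lemma oprojK n (E : 'M[R]_(N, n)) :
  E^T *m P *m E \in unitmx -> oproj E *m P *m E = E.
Proof. by move=> U; rewrite /oproj -[RHS]mulmx1 -(mulVmx U) !mulmxA. Qed.

Lemma oproj_unique n (E : 'M[R]_(N, n)) (W : 'M[R]_n) :
  E^T *m P *m E \in unitmx ->
  P *m (E *m W *m E^T) *m P *m E = P *m E -> E *m W *m E^T = oproj E.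
Proof.
set C := E^T *m P *m E => U /(congr1 (mulmx E^T)); rewrite !mulmxA => CWC.
have {}CWC : C *m W *m C = C by rewrite /C !mulmxA.
suff -> : W = invmx C by []; clearbody C.
have -> : W = invmx C *m (C *m W *m C) *m invmx C.
  by rewrite 2!mulmxA (mulVmx U) mul1mx -mulmxA (mulmxV U) mulmx1.
by rewrite CWC (mulVmx U) mul1mx.
Qed.

Section RankOneUpdate.
Variables (n : nat) (E : 'M[R]_(N, n)) (e : 'cV[R]_N).
Hypothesis posE' : posdef ((row_mx E e)^T *m P *m row_mx E e).

Let C := E^T *m P *m E.
Let w := e - oproj E *m P *m e.
Let d := (e^T *m schur E P *m e) 0 0.

Lemma posdef_row_mxl : posdef C.
Proof.
have hE : row_mx E e *m col_mx 1%:M 0 = E by rewrite mul_row_col mulmx1 mulmx0 addr0.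
have -> : C = (col_mx 1%:M 0)^T *m ((row_mx E e)^T *m P *m row_mx E e) *m col_mx 1%:M 0.
  by rewrite !mulmxA -(mulmxA _ (row_mx E e)) hE -trmx_mul hE.
apply: posdef_congruence => // v; rewrite mul_col_mx mul1mx mul0mx.
by rewrite col_mx_eq0 eqxx andbT.
Qed.
Let unitC : C \in unitmx := posdef_unitmx posdef_row_mxl.

Lemma residE : w = row_mx E e *m col_mx (- (invmx C *m E^T *m P *m e)) 1%:M.
Proof.
by rewrite mul_row_col mulmx1 mulmxN addrC /w /oproj !mulmxA.
Qed.

Lemma resid_orth : w^T *m P *m E = 0.
Proof.
rewrite /w linearB /= trmx_mul trmx_mul oprojT PT mulmxBl mulmxBl.
have -> : e^T *m (P *m oproj E) *m P *m E = e^T *m P *m (oproj E *m P *m E).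
  by rewrite !mulmxA.
by rewrite oprojK // subrr.
Qed.

Lemma resid_schur : w^T *m P *m e = e^T *m schur E P *m e.
Proof.
rewrite /w /schur linearB /= trmx_mul trmx_mul oprojT PT.
by rewrite mulmxBr mulmxBl !mulmxA.
Qed.

Lemma schur_pivot_gt0 : 0 < d.
Proof.
have wPw : w^T *m P *m w = w^T *m P *m e.
  by rewrite {2}/w mulmxBr /oproj !mulmxA resid_orth !mul0mx subr0.
case: posE' => _ /(_ (col_mx (- (invmx C *m E^T *m P *m e)) 1%:M)).
rewrite col_mx_eq0 oner_eq0 andbF => /(_ isT).
by rewrite /d -resid_schur -wPw residE trmx_mul !mulmxA.
Qed.

Lemma oproj_row_mx : oproj (row_mx E e) = oproj E + d^-1 *: (w *m w^T).
Proof.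
pose K : 'M[R]_(n + 1, n) := col_mx 1%:M 0.
pose v : 'cV[R]_(n + 1) := col_mx (- (invmx C *m E^T *m P *m e)) 1%:M.
have EK : row_mx E e *m K = E by rewrite mul_row_col mulmx1 mulmx0 addr0.
have wPe : w^T *m P *m e = d%:M by rewrite resid_schur [LHS]mx11_scalar.
have Z'E : row_mx E e *m (K *m invmx C *m K^T + d^-1 *: (v *m v^T)) *m (row_mx E e)^T
    = oproj E + d^-1 *: (w *m w^T).
  rewrite mulmxDr mulmxDl -scalemxAr -scalemxAl; congr (_ + _ *: _).
    by rewrite !mulmxA EK -mulmxA -trmx_mul EK.
  by rewrite !mulmxA -residE -mulmxA -trmx_mul -residE.
have Pw : P *m w = P *m e - P *m oproj E *m P *m e by rewrite mulmxBr !mulmxA.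
have wPE := resid_orth; clearbody w.
rewrite -Z'E; symmetry; apply: oproj_unique; first exact/posdef_unitmx.
rewrite Z'E !mul_mx_row; congr row_mx.
  have -> : P *m (oproj E + d^-1 *: (w *m w^T)) *m P *m E
      = P *m (oproj E *m P *m E) + d^-1 *: (P *m w *m (w^T *m P *m E)).
    by rewrite mulmxDr !mulmxDl -!scalemxAr -!scalemxAl !mulmxA.
  by rewrite oprojK // wPE mulmx0 scaler0 addr0.
have -> : P *m (oproj E + d^-1 *: (w *m w^T)) *m P *m e
    = P *m oproj E *m P *m e + d^-1 *: (P *m w *m (w^T *m P *m e)).
  by rewrite mulmxDr !mulmxDl -!scalemxAr -!scalemxAl !mulmxA.
rewrite wPe mul_mx_scalar scalerA mulVf ?gt_eqF ?schur_pivot_gt0 // scale1r.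
by rewrite Pw addrC subrK.
Qed.

Lemma schur_row_mx m (B : 'M[R]_(N, m)) :
  schur (row_mx E e) B = schur E B - d^-1 *: (schur E P *m e *m (e^T *m schur E B)).
Proof.
have Pw : P *m w = schur E P *m e by rewrite mulmxBr mulmxBl !mulmxA.
have wB : w^T *m B = e^T *m schur E B.
  by rewrite linearB /= trmx_mul trmx_mul oprojT PT mulmxBl mulmxBr !mulmxA.
rewrite -Pw -wB {1}/schur oproj_row_mx mulmxDr mulmxDl opprD addrA.
by rewrite -scalemxAr -scalemxAl; congr (_ - _ *: _); rewrite !mulmxA.
Qed.

End RankOneUpdate.

End OrthoProjection.

Section Greedy.
Variables (R : rcfType) (N Ny M : nat) (X : 'M[R]_(N, M)) (Y : 'M[R]_(Ny, M)) (lam : R).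
Local Notation P := (Pxx X lam).
Local Notation Qxx := (Qxx X lam).
Local Notation Qxy := (Qxy X Y lam).

Lemma PxxT : P^T = P.
Proof. by rewrite /Pxx linearD /= trmx_mul trmxK tr_scalar_mx. Qed.

Definition selmx (S : seq 'I_N) : 'M[R]_(N, size S) := colsub (tnth (in_tuple S)) 1%:M.

Lemma subrowsE m S (A : 'M[R]_(N, m)) : subrows S A = (selmx S)^T *m A.
Proof.
rewrite /subrows rowsubE; congr (_ *m _).
by apply/matrixP => i j; rewrite !mxE eq_sym.
Qed.

Lemma subprincE S (A : 'M[R]_N) : subprinc S A = (selmx S)^T *m A *m selmx S.
Proof.
rewrite /subprinc mxsubcr -[rowsub _ A]/(subrows S A) subrowsE.
by rewrite -[_ *m A]mulmx1 -mulmx_colsub mulmx1.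
Qed.

Lemma QxxE S : Qxx S = schur P (selmx S) P.
Proof. by rewrite /Qxx !subrowsE subprincE /schur /oproj trmx_mul PxxT trmxK !mulmxA. Qed.

Lemma QxyE S : Qxy S = schur P (selmx S) (Pxy X Y).
Proof. by rewrite /Qxy !subrowsE subprincE /schur /oproj trmx_mul PxxT trmxK !mulmxA. Qed.

Lemma selmx_rcons S a :
  selmx (rcons S a)
  = castmx (erefl N, etrans (addn1 _) (esym (size_rcons S a)))
      (row_mx (selmx S) (delta_mx a 0)).
Proof.
apply/matrixP => i j; rewrite castmxE /= !mxE cast_ord_id !(tnth_nth a) /=.
case: splitP => [j' | j'] /= jE; rewrite !mxE jE.
  by rewrite (tnth_nth a) nth_rcons ltn_ord.
by rewrite (ord1 j') addn0 nth_rcons ltnn eqxx andbT.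
Qed.

Lemma posdef_gram_rcons S a : posdef (subprinc (rcons S a) P) ->
  let E := row_mx (selmx S) (delta_mx a 0 : 'cV[R]_N) in posdef (E^T *m P *m E).
Proof. by rewrite subprincE selmx_rcons => /posdef_gram_castmx. Qed.

Lemma posdef_subprinc_rcons S a :
  posdef (subprinc (rcons S a) P) -> posdef (subprinc S P).
Proof. by rewrite (subprincE S) => /posdef_gram_rcons /posdef_row_mxl. Qed.

Lemma pivot_gt0 S a : posdef (subprinc (rcons S a) P) -> 0 < Qxx S a a.
Proof.
move=> /posdef_gram_rcons /(schur_pivot_gt0 PxxT).
by rewrite QxxE trmx_delta -rowE -colE !mxE.
Qed.

Lemma schur_selmx_rcons S a m (B : 'M[R]_(N, m)) : posdef (subprinc (rcons S a) P) ->
  schur P (selmx (rcons S a)) B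
  = schur P (selmx S) B - (Qxx S a a)^-1 *: (col a (Qxx S) *m row a (schur P (selmx S) B)).
Proof.
move=> /posdef_gram_rcons pd; rewrite selmx_rcons schur_castmx (schur_row_mx PxxT pd).
by rewrite QxxE trmx_delta -!rowE -!colE !mxE.
Qed.

Lemma xi_theta_pivot n (Xi : 'M[R]_(N, n)) (Th : 'M[R]_(Ny, n)) S a :
  Xi *m Xi^T = P - Qxx S -> Xi *m Th^T = Pxy X Y - Qxy S ->
  let c := Num.sqrt (Qxx S a a) in
  xi_theta X Y lam Xi Th a = (c^-1 *: col a (Qxx S), c^-1 *: (row a (Qxy S))^T).
Proof.
move=> gXi gTh c.
have deltaE : X *m (row a X)^T + lam *: col a 1%:M - Xi *m (row a Xi)^T = col a (Qxx S).
  rewrite -(subKr P (Qxx S)) -gXi !tr_row !colE !mulmxA mul1mx.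
  by rewrite /Pxx mulmxBl mulmxDl mul_scalar_mx.
have thetaE : Y *m (row a X)^T - Th *m (row a Xi)^T = (row a (Qxy S))^T.
  rewrite -(subKr (Pxy X Y) (Qxy S)) -gTh !linearB /= !tr_row !colE /Pxy !trmx_mul !trmxK.
  by rewrite !mulmxA.
by rewrite /xi_theta /= deltaE thetaE mxE.
Qed.

Lemma QxxT S : (Qxx S)^T = Qxx S.
Proof. by rewrite QxxE schurT // PxxT. Qed.

Lemma Qxx_rcons S a : posdef (subprinc (rcons S a) P) ->
  Qxx (rcons S a) = Qxx S - (Qxx S a a)^-1 *: (col a (Qxx S) *m (col a (Qxx S))^T).
Proof. by move=> pd; rewrite tr_col QxxT [LHS]QxxE schur_selmx_rcons // -QxxE. Qed.

Lemma Qxy_rcons S a : posdef (subprinc (rcons S a) P) ->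
  Qxy (rcons S a) = Qxy S - (Qxx S a a)^-1 *: (col a (Qxx S) *m row a (Qxy S)).
Proof. by move=> pd; rewrite !QxyE schur_selmx_rcons. Qed.

Lemma XTrev_gram S : posdef (subprinc S P) ->
  let XT := XTrev X Y lam (rev S) in
  XT.1 *m XT.1^T = P - Qxx S /\ XT.1 *m XT.2^T = Pxy X Y - Qxy S.
Proof.
elim/last_ind: S => [_ | S a IH pd] /=.
  have Z0 : oproj P (selmx [::]) = 0 by rewrite /oproj thinmx0 !mul0mx.
  by rewrite QxxE QxyE /schur Z0 mulmx0 !mul0mx !subr0 !subrr.
have [gXi gTh] := IH (posdef_subprinc_rcons pd).
rewrite rev_rcons.
set XT := XTrev X Y lam (rev S) in gXi gTh *.
set xt := xi_theta X Y lam XT.1 XT.2 a.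
have -> : XTrev X Y lam (a :: rev S) = (castmx (erefl N, addn1 _) (row_mx XT.1 xt.1),
                                       castmx (erefl Ny, addn1 _) (row_mx XT.2 xt.2)) by [].
rewrite /xt (xi_theta_pivot a gXi gTh) /= !mulmx_castmx_tr !tr_row_mx !mul_row_col.
rewrite gXi gTh (Qxx_rcons pd) (Qxy_rcons pd).
have cc := sqrtrVM (ltW (pivot_gt0 pd)).
rewrite !linearZ /= trmxK -!scalemxAl.
by rewrite !scalerA cc !scalerN !opprD !opprK !addrA.
Qed.

Lemma XiTh_gram S : posdef (subprinc S P) ->
  let XT := XiTh X Y lam S in
  XT.1 *m XT.1^T = P - Qxx S /\ XT.1 *m XT.2^T = Pxy X Y - Qxy S.
Proof. by move=> /XTrev_gram; rewrite /XiTh /= !mulmx_castmx_tr. Qed.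

Lemma Qxy_entry_gram n (Xi : 'M[R]_(N, n)) (Th : 'M[R]_(Ny, n)) S i (v : 'cV[R]_Ny) :
  Xi *m Th^T = Pxy X Y - Qxy S ->
  (row i (Qxy S) *m v) 0 0 = (row i X *m Y^T *m v) 0 0 - (row i Xi *m Th^T *m v) 0 0.
Proof.
move=> gTh; rewrite -(subKr (Pxy X Y) (Qxy S)) -gTh linearB /= mulmxBl /Pxy !row_mul.
by rewrite [LHS]mxE [X in _ + X]mxE.
Qed.

Lemma gval_rcons S a i : posdef (subprinc (rcons S a) P) ->
  let c := Num.sqrt (Qxx S a a) in
  let xi := c^-1 *: col a (Qxx S) in
  gval X lam (rcons S a) i = gval X lam S i - xi i 0 * xi i 0.
Proof.
move=> pd c xi; have cc : c^-1 * c^-1 = (Qxx S a a)^-1 := sqrtrVM (ltW (pivot_gt0 pd)).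
rewrite /gval (Qxx_rcons pd) -cc /xi; clearbody c; set Q := Qxx S; clearbody Q.
by rewrite !mxE big_ord1 !mxE; ring.
Qed.

Lemma fval_rcons S a i : posdef (subprinc (rcons S a) P) ->
  let c := Num.sqrt (Qxx S a a) in
  let xi := c^-1 *: col a (Qxx S) in
  let th := c^-1 *: (row a (Qxy S))^T in
  fval X Y lam (rcons S a) i
  = fval X Y lam S i - xi i 0 * (2 * (row i (Qxy S) *m th) 0 0 - sqnorm th * xi i 0).
Proof.
move=> pd c xi th; have cc : c^-1 * c^-1 = (Qxx S a a)^-1 := sqrtrVM (ltW (pivot_gt0 pd)).
rewrite /fval (Qxy_rcons pd) -cc /xi /th; clearbody c.
set Q := Qxx S; set Qy := Qxy S; clearbody Q Qy.
have -> : (row i (Qy - c^-1 * c^-1 *: (col a Q *m row a Qy)))^T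
    = (row i Qy)^T - (c^-1 *: col a Q) i 0 *: (c^-1 *: (row a Qy)^T).
  by rewrite !linearB /= !linearZ /= row_mul_cV linearZ /= !scalerN !scalerA !mxE mulrAC.
by rewrite sqnormBZ trmxK [_ * sqnorm _]mulrC.
Qed.

End Greedy.

(* k : 'I_p is 0-based: it stands for the paper's index k+1 in {1,...,p}.
   take k s = \bar S_{k-1}, take k.+1 s = \bar S_k, tnth s k = \bar s_k. *)
Theorem theorem2 (R : rcfType) (N Ny M p : nat)
  (X : 'M[R]_(N, M)) (Y : 'M[R]_(Ny, M)) (lam : R) (s : p.-tuple 'I_N) :
  (p <= N)%N -> 0 <= lam -> greedy X Y lam s ->
  forall (k : 'I_p) (i : 'I_N),
    feasible X lam (take k s) i ->
    let Xi := (XiTh X Y lam (take k s)).1 in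
    let Th := (XiTh X Y lam (take k s)).2 in
    let xi := (xi_theta X Y lam Xi Th (tnth s k)).1 in
    let th := (xi_theta X Y lam Xi Th (tnth s k)).2 in
    fval X Y lam (take k.+1 s) i
      = fval X Y lam (take k s) i
        - xi i 0 * (2 * (row i X *m Y^T *m th) 0 0
                    - 2 * (row i Xi *m Th^T *m th) 0 0
                    - sqnorm th * xi i 0)
    /\ gval X lam (take k.+1 s) i = gval X lam (take k s) i - xi i 0 * xi i 0.
Proof.
move=> _ _ greedy_s k i _ Xi Th xi th.
have [[_ pd] _] := greedy_s k.
have takeS : take k.+1 s = rcons (take k s) (tnth s k).
  by rewrite (take_nth (tnth s k)) ?size_tuple // -tnth_nth.
have [gXi gTh] : Xi *m Xi^T = Pxx X lam - Qxx X lam (take k s)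
    /\ Xi *m Th^T = Pxy X Y - Qxy X Y lam (take k s).
  exact: XiTh_gram (posdef_subprinc_rcons pd).
rewrite takeS (fval_rcons _ _ pd) (gval_rcons _ pd) (Qxy_entry_gram _ _ gTh).
rewrite /xi /th (xi_theta_pivot _ gXi gTh) /=; split => //; ring.
Qed.
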